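(* Let $(M,d)$ be a complete pointed metric space, let $y\in M$, and let $\mu$ be a positive Radon measure on $\beta\widetilde{M}$ concentrated on $p^{-1}\big((\mathcal{R}(M)\setminus\{y\})\times\{y\}\big)$. Then $\mu\preccurlyeq\nu$ for every positive Radon measure $\nu$ on $\beta\widetilde{M}$ with $\Phi^*\nu=\Phi^*\mu$. In particular, $\mu$ is $\preccurlyeq$-minimal. The same conclusions hold if $\mu$ is concentrated on $p^{-1}\big(\{x\}\times(\mathcal{R}(M)\setminus\{x\})\big)$ for some $x\in M$.
   Context: $\mathrm{Lip}_0(M)$: Lipschitz $f:M\to\mathbb{R}$ with $f(0)=0$ ($0$ the base point) normed by the Lipschitz constant. $\widetilde{M}=\{(x,y)\in M\times M:x\ne y\}$, $\beta\widetilde{M}$ its Stone–Čech compactification; Radon measures identified with $C(\beta\widetilde{M})^*$. $\Phi:\mathrm{Lip}_0(M)\to C(\beta\widetilde{M})$ maps $f$ to the continuous extension of $(x,y)\mapsto(f(x)-f(y))/d(x,y)$; $\Phi^*$ is its adjoint. $M^u$ is the uniform (Samuel) compactification of $M$; $p_1,p_2:\beta\widetilde{M}\to M^u$ continuously extend the coordinate projections, $p=(p_1,p_2)$. $\mathcal{R}(M)=\{\xi\in M^u:\overline{d_0}(\xi)<\infty\}$ where $\overline{d_0}:M^u\to[0,\infty]$ continuously extends $x\mapsto d(x,0)$. $G$ is the set of $g\in C(\beta\widetilde{M})$ with $d(x,y)g(x,y)\le d(x,u)g(x,u)+d(u,y)g(u,y)$ for all distinct $x,u,y\in M$; $\mu\preccurlyeq\nu$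 iff $\int g\,d\mu\le\int g\,d\nu$ for all $g\in G$; $\mu$ is $\preccurlyeq$-minimal if every positive $\nu\preccurlyeq\mu$ satisfies $\mu\preccurlyeq\nu$. Throughout, $M$ has at least three distinct points. *)

From HB Require Import structures.
From mathcomp Require Import all_boot all_order all_algebra.
From mathcomp Require Import all_classical all_reals all_analysis.
Set Implicit Arguments. Unset Strict Implicit. Unset Printing Implicit Defensive.
Import Order.TTheory GRing.Theory Num.Theory numFieldNormedType.Exports.
Local Open Scope classical_set_scope.
Local Open Scope ring_scope.

Definition is_metric (R : realType) (M : Type) (d : M -> M -> R) : Prop :=
  (forall x y, d x y = 0 <-> x = y) /\
  (forall x y, d x y = d y x) /\
  (forall x y z, d x z <= d x y + d y z).

Definition cauchy_seq (R : realType) (M : Type) (d : M -> M -> R) (s : nat -> M) :=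
  forall eps : R, 0 < eps -> exists N : nat, forall m n : nat,
    (N <= m)%N -> (N <= n)%N -> d (s m) (s n) < eps.

Definition complete_metric (R : realType) (M : Type) (d : M -> M -> R) :=
  forall s : nat -> M, cauchy_seq d s ->
    exists l : M, forall eps : R, 0 < eps -> exists N : nat, forall n : nat,
      (N <= n)%N -> d (s n) l < eps.

Definition lip0 (R : realType) (M : Type) (d : M -> M -> R) (o : M) (f : M -> R) :=
  f o = 0 /\ exists L : R, forall x y, `|f x - f y| <= L * d x y.

Definition bounded_unif_cont (R : realType) (M : Type) (d : M -> M -> R) (f : M -> R) :=
  (exists C : R, forall x, `|f x| <= C) /\
  forall eps : R, 0 < eps -> exists2 delta : R, 0 < delta &
    forall x y, d x y < delta -> `|f x - f y| < eps.

(* Functions on Mtilde = {(x,y) : x <> y} are represented as functions    *)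
(* M -> M -> X whose values off Mtilde are irrelevant.  Mtilde carries the *)
(* topology of M x M (metric max(d(x,x'), d(y,y'))).                      *)
Definition bounded_cont_tilde (R : realType) (M : Type) (d : M -> M -> R)
    (f : M -> M -> R) :=
  (exists C : R, forall x y, x <> y -> `|f x y| <= C) /\
  forall x y, x <> y -> forall eps : R, 0 < eps -> exists2 delta : R, 0 < delta &
    forall x' y', x' <> y' -> d x x' < delta -> d y y' < delta ->
      `|f x y - f x' y'| < eps.

Definition stone_cech_tilde (R : realType) (M : Type) (d : M -> M -> R)
    (K : ptopologicalType) (e : M -> M -> K) : Prop :=
  compact [set: K] /\ hausdorff_space K /\
  closure [set t : K | exists x y, x <> y /\ e x y = t] = [set: K] /\
  (forall G : K -> R, continuous G -> bounded_cont_tilde d (fun x y => G (e x y))) /\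
  (forall f : M -> M -> R, bounded_cont_tilde d f ->
     exists2 G : K -> R, continuous G & forall x y, x <> y -> G (e x y) = f x y).

Definition samuel_compactification (R : realType) (M : Type) (d : M -> M -> R)
    (Ku : ptopologicalType) (u : M -> Ku) : Prop :=
  compact [set: Ku] /\ hausdorff_space Ku /\
  closure (range u) = [set: Ku] /\
  (forall G : Ku -> R, continuous G -> bounded_unif_cont d (G \o u)) /\
  (forall f : M -> R, bounded_unif_cont d f ->
     exists2 G : Ku -> R, continuous G & forall x, G (u x) = f x).

Notation borel K := (g_sigma_algebraType (@open K)).

Definition radon (R : realType) (K : ptopologicalType)
    (mu : {measure set (borel K) -> \bar R}) : Prop :=
  (mu [set: K] < +oo)%E /\
  forall A : set (borel K), measurable A ->
    mu A = ereal_sup [set mu C | C in [set C : set K | compact C /\ C `<=` A]].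

Definition concentrated (R : realType) (K : ptopologicalType)
    (mu : {measure set (borel K) -> \bar R}) (A : set K) : Prop :=
  exists2 B : set (borel K), measurable B & B `<=` A /\ mu (~` B) = 0%E.

Definition integ (R : realType) (K : ptopologicalType)
    (mu : {measure set (borel K) -> \bar R}) (g : K -> R) : \bar R :=
  (\int[mu]_(x in [set: borel K]) (g x)%:E)%E.

Definition coneG (R : realType) (M : Type) (d : M -> M -> R)
    (K : ptopologicalType) (e : M -> M -> K) (g : K -> R) : Prop :=
  continuous g /\
  forall x w y, x <> w -> w <> y -> x <> y ->
    d x y * g (e x y) <= d x w * g (e x w) + d w y * g (e w y).

Definition prec (R : realType) (M : Type) (d : M -> M -> R)
    (K : ptopologicalType) (e : M -> M -> K)
    (mu nu : {measure set (borel K) -> \bar R}) : Prop :=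
  forall g, coneG d e g -> (integ mu g <= integ nu g)%E.

(* Phi^* nu = Phi^* mu : the functionals f |-> <Phi f, .> agree on Lip_0(M); *)
(* Phi f is the (unique) continuous extension of (f x - f y)/d(x,y).        *)
Definition same_Phi_star (R : realType) (M : Type) (d : M -> M -> R) (o : M)
    (K : ptopologicalType) (e : M -> M -> K)
    (mu nu : {measure set (borel K) -> \bar R}) : Prop :=
  forall f : M -> R, lip0 d o f ->
  forall G : K -> R, continuous G ->
    (forall x y, x <> y -> G (e x y) = (f x - f y) / d x y) ->
    integ mu G = integ nu G.

Definition prec_minimal (R : realType) (M : Type) (d : M -> M -> R)
    (K : ptopologicalType) (e : M -> M -> K)
    (mu : {measure set (borel K) -> \bar R}) : Prop :=
  forall nu : {measure set (borel K) -> \bar R}, radon nu ->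
    prec d e nu mu -> prec d e mu nu.

From HB Require Import structures.
From mathcomp Require Import all_boot all_order all_algebra.
From mathcomp Require Import all_classical all_reals all_analysis.
From mathcomp Require Import measurable_realfun ring lra.
Import Order.TTheory GRing.Theory Num.Theory numFieldNormedType.Exports.
Local Open Scope classical_set_scope.
Local Open Scope ring_scope.

(* Fix g in the cone G and write rho(x, z) = d(x, z) g(x, z); the cone
   inequality, together with rho(x, x) = 0 and a third point of M, makes rho
   satisfy the triangle inequality on all of M.  Hence f(x) = rho(x, y) obeys
   f(x) - f(z) <= rho(x, z), so f is Lipschitz and Phi f <= g.  Conversely the
   triangle inequality through y gives
     g(a, b) - Phi f(a, b) <= 2 |g|_oo d(b, y) / (d(a, y) - d(b, y)),
   so Phi f = g on p^-1((M^u \ {y}) x {y}).  If mu lives there,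
     int g dmu = int Phi f dmu = int Phi f dnu <= int g dnu.
   The other fibre is handled by f(z) = -rho(x, z).  For minimality, if nu <= mu then both
   Phi f and -Phi f lie in G, so Phi* nu = Phi* mu. *)

Lemma min1_gap_le {R : realDomainType} {h D a b k : R} :
  0 <= k -> 0 <= b -> a <= D + b -> h * D <= k * b ->
  Num.min b 1 < Num.min a 1 ->
  h * (Num.min a 1 - Num.min b 1) <= k * Num.min b 1.
Proof.
move=> k0 b0 aDb hD; rewrite !minEle.
case: (leP a 1) => a1; case: (leP b 1) => b1 gap //; try lra.
all: case: (leP 0 h) => h0; nra.
Qed.

Lemma quotient_sub_le {R : realFieldType} {A A' D D' L s : R} :
  0 < D -> D / 2 <= D' -> `|A| <= L * D -> `|A - A'| <= L * s ->
  `|D - D'| <= s -> `|A / D - A' / D'| <= 4 * L * s / D.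
Proof.
move=> D0 DD' hA hAA' hDD'.
have D'0 : 0 < D' by lra.
have Ls0 : 0 <= L * s by exact: le_trans (normr_ge0 _) hAA'.
have -> : A / D - A' / D' = (A * (D' - D) + D * (A - A')) / (D * D').
  by field; rewrite !gt_eqF.
rewrite normrM normfV (gtr0_norm (mulr_gt0 D0 D'0)) ler_pdivrMr ?mulr_gt0 //.
have -> : 4 * L * s / D * (D * D') = 4 * (L * s) * D'.
  by field; rewrite gt_eqF.
apply: le_trans (ler_normD _ _) _; rewrite !normrM (gtr0_norm D0) distrC.
have : `|A| * `|D - D'| <= L * D * s by apply: ler_pM => //; lra.
have : D * `|A - A'| <= D * (L * s) by apply: ler_wpM2l => //; lra.
nra.
Qed.

Section Metric.
Context {R : realType} {M : Type} {d : M -> M -> R}.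
Hypothesis hd : is_metric d.

Lemma dist_xx x : d x x = 0.
Proof. exact: (proj2 (hd.1 x x)). Qed.

Lemma dist_sym x y : d x y = d y x.
Proof. exact: hd.2.1. Qed.

Lemma dist_triangle x y z : d x z <= d x y + d y z.
Proof. exact: hd.2.2. Qed.

Lemma dist_ge0 x y : 0 <= d x y.
Proof.
by have := dist_triangle x y x; rewrite dist_xx (dist_sym y x); lra.
Qed.

Lemma dist_gt0 {x y} : x <> y -> 0 < d x y.
Proof.
by move=> xy; rewrite lt_neqAle dist_ge0 andbT; apply/eqP => /esym/hd.1.
Qed.

Lemma dist_sub_le x y x' y' : `|d x y - d x' y'| <= d x x' + d y y'.
Proof.
have := dist_triangle x x' y; have := dist_triangle x' y' y.
have := dist_triangle x' x y'; have := dist_triangle x y y'.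
rewrite ler_norml (dist_sym x' x) (dist_sym y' y); lra.
Qed.
End Metric.

Lemma Phi_bounded_cont_tilde {R : realType} {M : Type} {d : M -> M -> R}
    (f : M -> R) (L : R) : is_metric d -> 0 < L ->
  (forall x y, `|f x - f y| <= L * d x y) ->
  bounded_cont_tilde d (fun x y => (f x - f y) / d x y).
Proof.
move=> hd L0 hL; split.
  exists L => x y xy; rewrite normrM normfV (gtr0_norm (dist_gt0 hd xy)).
  by rewrite ler_pdivrMr ?dist_gt0.
move=> x y xy eps eps0; have D0 := dist_gt0 hd xy.
exists (Num.min (d x y / 4) (eps * d x y / (8 * L))).
  by rewrite lt_min !divr_gt0 ?mulr_gt0.
move=> x' y' x'y'; rewrite !lt_min => /andP[hx hx'] /andP[hy hy'].
have hs := dist_sub_le hd x y x' y'.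
have hf : `|(f x - f y) - (f x' - f y')| <= L * (d x x' + d y y').
  have -> : f x - f y - (f x' - f y') = (f x - f x') - (f y - f y') by ring.
  by apply: le_trans (ler_normB _ _) _; have := hL x x'; have := hL y y'; lra.
have hD' : d x y / 2 <= d x' y' by move: hs; rewrite ler_norml; lra.
apply: le_lt_trans (quotient_sub_le D0 hD' (hL x y) hf hs) _.
move: hx' hy'; rewrite ltr_pdivrMr // !ltr_pdivlMr ?mulr_gt0 //; lra.
Qed.

Lemma continuous_bounded {R : realType} {K : topologicalType} {G : K -> R} :
  compact [set: K] -> continuous G -> exists C, forall t, `|G t| <= C.
Proof.
move=> cK cG.
have /compact_bounded [C [_ hC]] : compact (G @` [set: K]).
  by apply: continuous_compact => //; exact: continuous_subspaceT.
exists (C + 1) => t; apply: (hC (C + 1)); first lra.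
by exists t.
Qed.

Section Integration.
Context {R : realType} {K : ptopologicalType}.
Hypothesis cK : compact [set: K].
Variable mu : {measure set (borel K) -> \bar R}.
Hypothesis fmu : (mu [set: K] < +oo)%E.

Lemma continuous_measurable_borel (g : K -> R) :
  continuous g -> measurable_fun [set: borel K] g.
Proof.
move=> cg; apply: (measurability _ (RGenOpens.measurableE R)).
move=> _ [_ [a [b ->]] <-]; rewrite setTI; apply: sub_sigma_algebra.
by move/continuousP: cg; apply; exact: interval_open.
Qed.

Lemma continuous_integrable (g : K -> R) :
  continuous g -> mu.-integrable [set: borel K] (EFin \o g).
Proof.
move=> cg; have [C hC] := continuous_bounded cK cg.
apply: measurable_bounded_integrable => //.
  exact: continuous_measurable_borel.
apply: filterS (nbhs_pinfty_ge (num_real C)) => N CN x _ /=.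
exact: le_trans (hC x) CN.
Qed.

Lemma integN (g : K -> R) :
  continuous g -> integ mu (fun t => - g t) = (- integ mu g)%E.
Proof.
move=> cg; rewrite /integ.
under eq_integral do rewrite EFinN -mulN1e.
by rewrite integralZl ?mulN1e //; exact: continuous_integrable.
Qed.

Lemma le_integ {g G : K -> R} : continuous g -> continuous G ->
  (forall t, g t <= G t) -> (integ mu g <= integ mu G)%E.
Proof.
move=> cg cG gG; rewrite /integ; apply: le_integral => //.
- exact: continuous_integrable.
- exact: continuous_integrable.
by move=> t _; rewrite lee_fin.
Qed.

Lemma eq_integ_on {B : set (borel K)} {g G : K -> R} :
  measurable B -> mu (~` B) = 0%E -> continuous g -> continuous G ->
  (forall t, B t -> g t = G t) -> integ mu g = integ mu G.
Proof.
move=> mB null cg cG gG; rewrite /integ; apply: ae_eq_integral => //;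
  try by apply/measurable_EFinP; exact: continuous_measurable_borel.
exists (~` B); split => //; first exact: measurableC.
by move=> t /= nt Bt; apply: nt => _; rewrite gG.
Qed.
End Integration.

Section StoneCech.
Context {R : realType} {M : Type} {d : M -> M -> R}.
Context {K : ptopologicalType} {e : M -> M -> K}.
Hypothesis hK : stone_cech_tilde d e.

Lemma stone_cech_near (t : K) (P : set K) :
  (\forall s \near t, P s) -> exists x y, x <> y /\ P (e x y).
Proof.
move=> Pt; have [_ [_ [dense _]]] := hK.
have : closure [set s | exists x y, x <> y /\ e x y = s] t by rewrite dense.
by move=> /(_ _ Pt) [_ [[x [y [xy <-]]] Pxy]]; exists x, y.
Qed.

Lemma stone_cech_le0 (h : K -> R) (P : set K) (t : K) :
  continuous h -> (\forall s \near t, P s) ->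
  (forall x y, x <> y -> P (e x y) -> h (e x y) <= 0) -> h t <= 0.
Proof.
move=> ch Pt hle; rewrite leNgt; apply/negP => ht.
have hpos : \forall s \near t, 0 < h s.
  exact: (@cvgr_gt _ _ _ (nbhs_filter t) _ _ (ch t) 0 ht).
have [x [y [xy [Pxy]]]] := stone_cech_near _ _ (filterI Pt hpos).
by rewrite ltNge hle.
Qed.

Lemma stone_cech_le0_everywhere (h : K -> R) :
  continuous h -> (forall x y, x <> y -> h (e x y) <= 0) -> forall t, h t <= 0.
Proof.
move=> ch hle t; apply: (stone_cech_le0 h setT t ch); first exact: filterT.
by move=> x y xy _; apply: hle.
Qed.

Lemma stone_cech_le0_of_weighted (h P Q : K -> R) (k : R) (t : K) :
  continuous h -> continuous P -> continuous Q -> Q t = 0 -> 0 < P t ->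
  (forall x y, x <> y -> Q (e x y) < P (e x y) ->
     h (e x y) * (P (e x y) - Q (e x y)) <= k * Q (e x y)) ->
  h t <= 0.
Proof.
move=> ch cP cQ Qt Pt hle.
have cPQ : continuous (fun s => P s - Q s).
  by move=> s; exact: (continuousB (cP s) (cQ s)).
have near_t : \forall s \near t, 0 < P s - Q s.
  by apply: (@cvgr_gt _ _ _ (nbhs_filter t) _ _ (cPQ t)); rewrite Qt subr0.
have : h t * (P t - Q t) - k * Q t <= 0.
  apply: (stone_cech_le0 (fun s => h s * (P s - Q s) - k * Q s) _ t _ near_t).
    move=> s; apply: (continuousB (continuousM (ch s) (cPQ s))).
    exact: (continuousM (@cst_continuous _ _ k s) (cQ s)).
  by move=> x y xy /=; rewrite subr_gt0 subr_le0; exact: hle.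
by rewrite Qt subr0 mulr0 subr0 pmulr_lle0.
Qed.
End StoneCech.

Section Samuel.
Context {R : realType} {M : Type} {d : M -> M -> R}.
Hypothesis hd : is_metric d.
Context {Ku : ptopologicalType} {u : M -> Ku}.
Hypothesis hKu : samuel_compactification d u.

Lemma samuel_dist_min1 (y : M) : exists D : Ku -> R,
  [/\ continuous D, forall xi, 0 <= D xi &
       forall x, D (u x) = Num.min (d x y) 1].
Proof.
have min1_ge0 x : 0 <= Num.min (d x y) 1 by rewrite le_min (dist_ge0 hd) ler01.
have [_ [_ [_ [_ extend]]]] := hKu.
have [|D cD hD] := extend (fun x => Num.min (d x y) 1).
  split; first by exists 1 => x; rewrite ger0_norm // ge_min lexx orbT.
  move=> eps eps0; exists eps => // x z xz.
  have := dist_sub_le hd x y z y; rewrite dist_xx // addr0.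
  rewrite ler_norml ltr_norml !minEle.
  by case: (leP (d x y) 1); case: (leP (d z y) 1); lra.
exists (fun xi => `|D xi|); split => [xi|xi|x]; last by rewrite hD ger0_norm.
  exact: (continuous_comp (cD xi) (@norm_continuous _ R^o _)).
exact: normr_ge0.
Qed.

Lemma samuel_dist_min1_eq0 (y : M) (D : Ku -> R) : continuous D ->
  (forall x, D (u x) = Num.min (d x y) 1) -> forall xi, D xi = 0 -> xi = u y.
Proof.
move=> cD hD xi Dxi; apply: contrapT => xiy.
have [cpt [haus [dense [unif _]]]] := hKu.
have acc := hausdorff_accessible haus.
have creg := @normal_completely_regular R _ (compact_normal haus cpt) acc.
have [H [cH _ H0 H1]] := (@uniform_separatorP _ R _ _).1
  (creg xi [set u y] (@accessible_closed_set1 Ku acc (u y)) xiy).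
have Hxi : H xi = 0 by apply: H0; exists xi.
have Huy : H (u y) = 1 by apply: H1; exists (u y).
have [_ /(_ (1 / 2) ltac:(lra)) [del del0 hdel]] := unif H cH.
have near_xi : \forall s \near xi, D s < Num.min del 1 /\ H s < 1 / 2.
  apply: filterI.
    apply: (@cvgr_lt _ _ _ (nbhs_filter xi) _ _ (cD xi)).
    by rewrite Dxi lt_min del0 ltr01.
  by apply: (@cvgr_lt _ _ _ (nbhs_filter xi) _ _ (cH xi)); rewrite Hxi; lra.
have : closure (range u) xi by rewrite dense.
move=> /(_ _ near_xi) [_ [[x _ <-] []]]; rewrite hD => dxy Hx.
have /hdel : d x y < del.
  by move: dxy; rewrite !minEle; case: (leP (d x y) 1); case: (leP del 1); lra.
by rewrite /= Huy ltr_norml; lra.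
Qed.
End Samuel.

(* On the diagonal, where [e] carries no meaning, the factor [d x x = 0]
   discards the value of [g]. *)
Definition weighted_dist {R : realType} {M : Type} (d : M -> M -> R)
    {K : Type} (e : M -> M -> K) (g : K -> R) (x y : M) : R :=
  d x y * g (e x y).

Lemma exists_other {M : Type} (x y : M) :
  (exists a b c : M, [/\ a <> b, b <> c & a <> c]) ->
  exists z, z <> x /\ z <> y.
Proof.
move=> [a [b [c [ab bc ac]]]]; apply: contrapT => none.
have xy_only v : v = x \/ v = y.
  apply: contrapT => /not_orP[vx vy]; exact: none (ex_intro _ v (conj vx vy)).
by case: (xy_only a) (xy_only b) (xy_only c) ab bc ac => -> [->|->] [->|->].
Qed.

Section Cone.
Context {R : realType} {M : Type} {d : M -> M -> R}.
Context {K : ptopologicalType} {e : M -> M -> K}.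
Context {Ku : ptopologicalType} {u : M -> Ku} {p1 p2 : K -> Ku}.
Hypothesis hd : is_metric d.
Hypothesis three : exists a b c : M, [/\ a <> b, b <> c & a <> c].
Hypothesis hK : stone_cech_tilde d e.
Hypothesis hKu : samuel_compactification d u.
Hypotheses (hp1 : continuous p1) (hp2 : continuous p2).
Hypothesis hp1e : forall x y, x <> y -> p1 (e x y) = u x.
Hypothesis hp2e : forall x y, x <> y -> p2 (e x y) = u y.
Variable g : K -> R.
Hypothesis hg : coneG d e g.

Local Notation rho := (weighted_dist d e g).

Lemma weighted_dist_xx x : rho x x = 0.
Proof. by rewrite /weighted_dist dist_xx // mul0r. Qed.

Lemma weighted_dist_triangle x w z : rho x z <= rho x w + rho w z.
Proof.
have [_ cone] := hg.
have [->|xz] := pselect (x = z).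
  rewrite weighted_dist_xx; have [->|zw] := pselect (z = w).
    by rewrite weighted_dist_xx addr0.
  have [v [vz vw]] := exists_other z w three.
  have := cone z w v zw (nesym vw) (nesym vz).
  have := cone w z v (nesym zw) (nesym vz) (nesym vw).
  rewrite /weighted_dist; lra.
have [->|xw] := pselect (x = w); first by rewrite weighted_dist_xx add0r.
have [->|wz] := pselect (w = z); first by rewrite weighted_dist_xx addr0.
exact: cone.
Qed.

Lemma weighted_dist_le {C : R} :
  (forall t, `|g t| <= C) -> forall x y, rho x y <= C * d x y.
Proof.
move=> hC x y; rewrite /weighted_dist mulrC ler_wpM2r ?dist_ge0 //.
by have := hC (e x y); rewrite ler_norml => /andP[].
Qed.

Lemma Phi_le_of_potential {f : M -> R} {G : K -> R} : continuous G ->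
  (forall x z, f x - f z <= rho x z) ->
  (forall x z, x <> z -> G (e x z) = (f x - f z) / d x z) ->
  forall t, G t <= g t.
Proof.
move=> cG hf hG t; rewrite -subr_le0; move: t.
apply: (stone_cech_le0_everywhere hK) => [s|x z xz].
  exact: (continuousB (cG s) (hg.1 s)).
by rewrite hG // subr_le0 ler_pdivrMr ?(dist_gt0 hd) // mulrC; exact: hf.
Qed.

Lemma integ_le_of_potential (o : M) (mu nu : {measure set (borel K) -> \bar R})
    (f : M -> R) (B : set (borel K)) :
  (mu [set: K] < +oo)%E -> (nu [set: K] < +oo)%E ->
  measurable B -> mu (~` B) = 0%E ->
  (forall x z, f x - f z <= rho x z) ->
  (forall G : K -> R, continuous G ->
     (forall x z, x <> z -> G (e x z) = (f x - f z) / d x z) ->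
     forall t, B t -> g t <= G t) ->
  same_Phi_star d o e nu mu -> (integ mu g <= integ nu g)%E.
Proof.
move=> fmu fnu mB null hf tight hsame.
have [cK _] := hK; have [cg _] := hg.
have [C hC] := continuous_bounded cK cg.
have C0 : 0 <= C := le_trans (normr_ge0 _) (hC point).
pose f0 x := f x - f o.
have lip_f0 x z : `|f0 x - f0 z| <= (C + 1) * d x z.
  have := hf x z; have := hf z x; have := weighted_dist_le hC x z.
  have := weighted_dist_le hC z x; have := dist_ge0 hd x z.
  by rewrite /f0 (dist_sym hd z x) ler_norml; lra.
have [_ [_ [_ [_ extend]]]] := hK.
have [G cG hG0] :=
  extend _ (Phi_bounded_cont_tilde f0 _ hd (ltr_wpDl C0 ltr01) lip_f0).
have hG x z : x <> z -> G (e x z) = (f x - f z) / d x z.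
  by move=> xz; rewrite hG0 // /f0 opprB addrA subrK.
have Gg := Phi_le_of_potential cG hf hG.
have -> : integ mu g = integ mu G.
  apply: (eq_integ_on mu mB null cg cG) => t Bt.
  by apply/le_anti; rewrite Gg tight.
have lip0_f0 : lip0 d o f0 by split; [rewrite /f0 subrr | exists (C + 1)].
rewrite -(hsame f0 lip0_f0 G cG hG0).
exact: (le_integ cK nu fnu cG cg Gg).
Qed.

(* [pa, pb] is [p1, p2] or [p2, p1], and [ca, cb] the matching coordinates of
   a pair: near [t] the [cb]-coordinate approaches [y] while the
   [ca]-coordinate stays away from it. *)
Lemma cone_le_Phi_on_fibre (y : M) (pa pb : K -> Ku) (ca cb : M -> M -> M)
    (f : M -> R) (k : R) :
  continuous pa -> continuous pb -> 0 <= k ->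
  (forall a b, a <> b -> pa (e a b) = u (ca a b)) ->
  (forall a b, a <> b -> pb (e a b) = u (cb a b)) ->
  (forall a b, d (ca a b) y <= d a b + d (cb a b) y) ->
  (forall a b, rho a b - (f a - f b) <= k * d (cb a b) y) ->
  forall G : K -> R, continuous G ->
  (forall x z, x <> z -> G (e x z) = (f x - f z) / d x z) ->
  forall t, pa t <> u y -> pb t = u y -> g t <= G t.
Proof.
move=> cpa cpb k0 hpa hpb tri defect G cG hG t pat pbt; rewrite -subr_le0.
have [D [cD D0 hD]] := samuel_dist_min1 hd hKu y.
have cDp (p : K -> Ku) : continuous p -> continuous (D \o p).
  by move=> cp s; exact: (continuous_comp (cp s) (cD (p s))).
have cgG : continuous (fun s => g s - G s).
  by move=> s; exact: (continuousB (hg.1 s) (cG s)).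
apply: (stone_cech_le0_of_weighted hK _ _ _ k t cgG (cDp _ cpa) (cDp _ cpb)).
- by rewrite /= pbt hD dist_xx // minEle ler01.
- rewrite lt_neqAle D0 andbT; apply/eqP => /esym.
  by move=> /(samuel_dist_min1_eq0 hKu y D cD hD)/pat.
move=> a b ab; rewrite /= hpa // hpb // !hD.
apply: (min1_gap_le k0 (dist_ge0 hd _ _) (tri a b)).
rewrite hG // mulrBl divfK ?gt_eqF ?(dist_gt0 hd) // mulrC.
exact: defect.
Qed.

Section Concentrated.
Variables (o : M) (mu nu : {measure set (borel K) -> \bar R}).
Hypotheses (fmu : (mu [set: K] < +oo)%E) (fnu : (nu [set: K] < +oo)%E).
Hypothesis hsame : same_Phi_star d o e nu mu.
Variable B : set (borel K).
Hypotheses (mB : measurable B) (null : mu (~` B) = 0%E).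

Lemma integ_le_of_p2_fibre (y : M) :
  B `<=` [set t | p1 t <> u y /\ p2 t = u y] -> (integ mu g <= integ nu g)%E.
Proof.
move=> Bsub; have [C hC] := continuous_bounded hK.1 hg.1.
have C0 : 0 <= C := le_trans (normr_ge0 _) (hC point).
apply: (integ_le_of_potential o mu nu (fun z => rho z y) B
  fmu fnu mB null _ _ hsame).
  by move=> x z; have := weighted_dist_triangle x z y; lra.
move=> G cG hG t /Bsub[p1t p2t].
apply: (cone_le_Phi_on_fibre y _ _ (fun a _ => a) (fun _ b => b) _ (2 * C)
  hp1 hp2 _ hp1e hp2e _ _ G cG hG t p1t p2t) => [|a b|a b]; first lra.
  exact: dist_triangle.
have := weighted_dist_triangle a y b; have := weighted_dist_le hC y b.
by have := weighted_dist_le hC b y; rewrite (dist_sym hd y b); lra.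
Qed.

Lemma integ_le_of_p1_fibre (x : M) :
  B `<=` [set t | p1 t = u x /\ p2 t <> u x] -> (integ mu g <= integ nu g)%E.
Proof.
move=> Bsub; have [C hC] := continuous_bounded hK.1 hg.1.
have C0 : 0 <= C := le_trans (normr_ge0 _) (hC point).
apply: (integ_le_of_potential o mu nu (fun z => - rho x z) B
  fmu fnu mB null _ _ hsame).
  by move=> a b; have := weighted_dist_triangle x a b; lra.
move=> G cG hG t /Bsub[p1t p2t].
apply: (cone_le_Phi_on_fibre x _ _ (fun _ b => b) (fun a _ => a) _ (2 * C)
  hp2 hp1 _ hp2e hp1e _ _ G cG hG t p2t p1t) => [|a b|a b]; first lra.
  by rewrite (dist_sym hd a b); exact: dist_triangle.
have := weighted_dist_triangle a x b; have := weighted_dist_le hC a x.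
by have := weighted_dist_le hC x a; rewrite (dist_sym hd x a); lra.
Qed.
End Concentrated.
End Cone.

Lemma coneG_Phi {R : realType} {M : Type} {d : M -> M -> R}
    {K : ptopologicalType} {e : M -> M -> K} (f : M -> R) (G : K -> R) :
  is_metric d -> continuous G ->
  (forall x y, x <> y -> G (e x y) = (f x - f y) / d x y) ->
  coneG d e G /\ coneG d e (fun t => - G t).
Proof.
move=> hd cG hG.
have dG x y : x <> y -> d x y * G (e x y) = f x - f y.
  by move=> xy; rewrite hG // mulrC divfK // gt_eqF // (dist_gt0 hd).
split; split=> [s|x w y xw wy xy]; first exact: cG.
- by rewrite !dG //; lra.
- exact: (continuousN (cG s)).
- by rewrite !mulrN !dG //; lra.
Qed.

Lemma same_Phi_star_of_prec {R : realType} {M : Type} {d : M -> M -> R}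
    (o : M) {K : ptopologicalType} {e : M -> M -> K}
    (mu nu : {measure set (borel K) -> \bar R}) :
  is_metric d -> compact [set: K] ->
  (mu [set: K] < +oo)%E -> (nu [set: K] < +oo)%E ->
  prec d e nu mu -> same_Phi_star d o e nu mu.
Proof.
move=> hd cK fmu fnu hprec f _ G cG hG.
have [cone_G cone_NG] := coneG_Phi f G hd cG hG.
apply/le_anti; rewrite hprec //= -leeN2 -!integN //.
exact: hprec.
Qed.

Theorem proposition3p14 (R : realType) (M : Type) (d : M -> M -> R) (o : M)
  (hd : is_metric d) (hcomplete : complete_metric d)
  (three : exists a b c : M, [/\ a <> b, b <> c & a <> c])
  (K : ptopologicalType) (e : M -> M -> K) (hK : stone_cech_tilde d e)
  (Ku : ptopologicalType) (u : M -> Ku) (hKu : samuel_compactification d u)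
  (p1 p2 : K -> Ku) (hp1 : continuous p1) (hp2 : continuous p2)
  (hp1e : forall x y, x <> y -> p1 (e x y) = u x)
  (hp2e : forall x y, x <> y -> p2 (e x y) = u y)
  (d0 : Ku -> \bar R) (hd0 : continuous d0)
  (hd0u : forall x, d0 (u x) = (d x o)%:E)
  (mu : {measure set (borel K) -> \bar R}) (hmu : radon mu) :
  let RM := [set xi : Ku | (d0 xi < +oo)%E] in
  ((exists y : M, concentrated mu
       [set t : K | RM (p1 t) /\ p1 t <> u y /\ p2 t = u y]) \/
   (exists x : M, concentrated mu
       [set t : K | p1 t = u x /\ RM (p2 t) /\ p2 t <> u x])) ->
  (forall nu : {measure set (borel K) -> \bar R}, radon nu ->
     same_Phi_star d o e nu mu -> prec d e mu nu) /\
  prec_minimal d e mu.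
Proof.
move=> RM conc; have [fmu _] := hmu.
have prec_mu nu : radon nu -> same_Phi_star d o e nu mu -> prec d e mu nu.
  move=> [fnu _] hsame g hg.
  case: conc => [[y [B mB [Bsub null]]] | [x [B mB [Bsub null]]]].
  - apply: (integ_le_of_p2_fibre hd three hK hKu hp1 hp2 hp1e hp2e g hg o mu nu
      fmu fnu hsame B mB null y).
    by move=> t /Bsub[_].
  - apply: (integ_le_of_p1_fibre hd three hK hKu hp1 hp2 hp1e hp2e g hg o mu nu
      fmu fnu hsame B mB null x).
    by move=> t /Bsub[? [_]].
split=> // nu hnu hprec; apply: prec_mu => //.
exact: (same_Phi_star_of_prec o mu nu hd hK.1 fmu hnu.1 hprec).
Qed.
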